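(* Let $D=\mathrm{diag}(1,-1,1,-1,\ldots)=(1,-x)$, $\mathbb{F}^{\rm S}=(1,x(1+x))$, $\mathbb{L}^{\rm S}=(1+2x,x(1+x))$, let $\mathbf e=[1,1,1,\ldots]^T$, and let $C_n=\frac{1}{n+1}\binom{2n}{n}$ be the Catalan numbers. Then: (a) $D(\mathbb{F}^{\rm S})^{-1}D\,\mathbf e=[C_0,C_1,C_2,\ldots,C_n,\ldots]^T$; (b) $D(\mathbb{L}^{\rm S})^{-1}D\,\mathbf e=[C_0,3C_1,5C_2,\ldots,(2n+1)C_n,\ldots]^T$.
   Context: All matrices are infinite with rows and columns indexed by $0,1,2,\ldots$. For formal power series $g(x)=g_0+g_1x+\cdots$ with $g_0\ne0$ and $f(x)=f_1x+f_2x^2+\cdots$ with $f_1\ne0$, $(g(x),f(x))$ denotes the (Riordan) infinite lower triangular matrix whose $j$-th column has generating function $g(x)f(x)^j$. These matrices form a group under matrix multiplication with $(g,f)(h,l)=(g\cdot h(f),l(f))$. Since the matrices are lower triangular, each entry of the product with $\mathbf e$ is a finite row sum. *)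

From mathcomp Require Import all_boot all_order all_algebra.
Set Implicit Arguments. Unset Strict Implicit. Unset Printing Implicit Defensive.
Import GRing.Theory Num.Theory.
Local Open Scope ring_scope.

(* formal power series: coefficient sequences *)
Definition ps := nat -> rat.
Definition ps_one : ps := fun n => (n == 0%N)%:R.
Definition ps_mul (a b : ps) : ps :=
  fun n => \sum_(i < n.+1) a i * b (n - i)%N.
Definition ps_pow (a : ps) (j : nat) : ps := iter j (ps_mul a) ps_one.

Definition imx := nat -> nat -> rat.
Definition ivec := nat -> rat.

(* Riordan array (g, f): column j has generating function g * f^j *)
Definition riordan (g f : ps) : imx := fun n j => ps_mul g (ps_pow f j) n.

Definition lower_tri (A : imx) : Prop := forall i j, (i < j)%N -> A i j = 0.
Definition imx_one : imx := fun i j => (i == j)%:R.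
(* product of lower triangular matrices: finite sums *)
Definition imx_mul (A B : imx) : imx :=
  fun i j => \sum_(k < i.+1) A i k * B k j.
Definition imx_app (A : imx) (v : ivec) : ivec :=
  fun i => \sum_(k < i.+1) A i k * v k.

Definition is_inverse (M A : imx) : Prop :=
  lower_tri M /\ imx_mul M A = imx_one /\ imx_mul A M = imx_one.

(* D = (1, -x) *)
Definition Dmx : imx := riordan ps_one (fun n => if n == 1%N then -1 else 0).
(* F^S = (1, x(1+x)), L^S = (1+2x, x(1+x)) *)
Definition xx2 : ps := fun n => if (n == 1%N) || (n == 2%N) then 1 else 0.
Definition FS : imx := riordan ps_one xx2.
Definition LS : imx := riordan (fun n => if n == 0%N then 1 else if n == 1%N then 2 else 0) xx2.

Definition e_vec : ivec := fun _ => 1.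
Definition catalan (n : nat) : rat := ('C(n.*2, n))%:R / (n.+1)%:R.

(* D e is the alternating vector ((-1)^n), so if A w = ((-1)^n) for A = F^S or L^S
   and M = A^-1, then (D M D e)_n = (-1)^n w_n.  The n-th entry of F^S a is
   sum_k C(k, n-k) a_k, and L^S = (1 + 2x) F^S; with (2k+1) C_k = 2 C(2k,k) - C_k
   everything reduces to
     sum_k (-1)^k C(k, n-k) C_k = (-1)^n   and   sum_k (-1)^k C(k, n-k) C(2k,k) = (-2)^n,
   (in generating functions: at t = x(1+x), c(-t) = 1/(1+x) and
   1/sqrt(1+4t) = 1/(1+2x), because 1 + 4t = (1+2x)^2).  Both sums are proved by creative telescoping with a single
   Zeilberger certificate.  The unitriangular matrices F^S and L^S are inverted
   by forward substitution. *)

From mathcomp Require Import all_boot all_order all_algebra.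
From mathcomp Require Import ring.
From Stdlib Require Import FunctionalExtensionality.
Set Implicit Arguments. Unset Strict Implicit. Unset Printing Implicit Defensive.
Import GRing.Theory Num.Theory.
Local Open Scope ring_scope.

Definition ps_shift (p : ps) : ps := fun n => if n is n'.+1 then p n' else 0.

Lemma ps_mul0 (a p : ps) : ps_mul a p 0 = a 0%N * p 0%N.
Proof. by rewrite /ps_mul big_ord1. Qed.

Lemma ps_mulS (a p : ps) n :
  ps_mul a p n.+1 = a 0%N * p n.+1 + ps_mul (fun i => a i.+1) p n.
Proof. by rewrite /ps_mul big_ord_recl subn0. Qed.

Lemma ps_mul_const (a p : ps) n :
  (forall i, a i.+1 = 0) -> ps_mul a p n = a 0%N * p n.
Proof.
case: n => [|n] a_const; first exact: ps_mul0.
rewrite ps_mulS /ps_mul big1 ?addr0 // => i _.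
by rewrite a_const mul0r.
Qed.

Lemma ps_mul_linear (a p : ps) n : (forall i, a i.+2 = 0) ->
  ps_mul a p n = a 0%N * p n + a 1%N * ps_shift p n.
Proof.
case: n => [|n] a_lin; first by rewrite ps_mul0 mulr0 addr0.
by rewrite ps_mulS ps_mul_const.
Qed.

Lemma ps_mul1 p n : ps_mul ps_one p n = p n.
Proof. by rewrite ps_mul_const ?mul1r. Qed.

Lemma ps_mul_xx2 p n : ps_mul xx2 p n = ps_shift p n + ps_shift (ps_shift p) n.
Proof.
case: n => [|n]; first by rewrite ps_mul0 mul0r addr0.
by rewrite ps_mulS ps_mul_linear // !mul1r mul0r add0r.
Qed.

Lemma ps_powS a j : ps_pow a j.+1 = ps_mul a (ps_pow a j).
Proof. by []. Qed.

Lemma Dmx_coef i j : Dmx i j = (i == j)%:R * (-1) ^+ j.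
Proof.
rewrite /Dmx /riordan ps_mul1.
elim: j i => [|j IHj] i; first by case: i.
rewrite ps_powS ps_mul_linear // mul0r add0r.
case: i => [|i] /=; first by rewrite mulr0 mul0r.
by rewrite IHj eqSS exprS mulrCA mulN1r.
Qed.

Lemma FS_coef n k : FS n k = if (k <= n)%N then ('C(k, n - k))%:R else 0.
Proof.
rewrite /FS /riordan ps_mul1.
elim: k n => [|k IHk] n; first by rewrite /= /ps_one subn0 bin0n.
rewrite ps_powS ps_mul_xx2.
case: n => [|[|n]] /=; rewrite ?IHk ?addr0 //; first by case: k {IHk}.
rewrite ltnS subSS; case: (leqP k n) => [le_kn|lt_nk].
  by rewrite leqW // subSn // binS natrD.
rewrite addr0; case: leqP => // _.
have /eqP -> : (n.+1 - k == 0)%N by rewrite subn_eq0.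
by rewrite !bin0.
Qed.

Lemma LS_coef n k : LS n k = FS n k + 2 * ps_shift (FS ^~ k) n.
Proof.
by rewrite /LS /FS /riordan ps_mul_linear //= mul1r; case: n => [|n] /=; rewrite !ps_mul1.
Qed.

Lemma sum_mul_delta (R : pzSemiRingType) (F : nat -> R) n (j : nat) :
  \sum_(k < n) F k * ((k : nat) == j)%:R = if (j < n)%N then F j else 0.
Proof.
under eq_bigr do rewrite mulr_natr mulrb.
by rewrite -big_mkcond big_ord1_eq.
Qed.

Lemma sum_lower_widen (A : imx) (v : ivec) l i : lower_tri A -> (l <= i)%N ->
  \sum_(k < l.+1) A l k * v k = \sum_(k < i.+1) A l k * v k.
Proof.
move=> lowA le_li.
rewrite (big_ord_widen i.+1 (fun k => A l k * v k)) ?ltnS // big_mkcond /=.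
by apply: eq_bigr => k _; case: ltnP => // lt_lk; rewrite lowA ?mul0r.
Qed.

Lemma imx_mulA A B C : lower_tri B ->
  imx_mul (imx_mul A B) C = imx_mul A (imx_mul B C).
Proof.
move=> lowB; apply: functional_extensionality => i.
apply: functional_extensionality => j; rewrite /imx_mul.
under eq_bigr do rewrite mulr_suml.
rewrite exchange_big /=; apply: eq_bigr => l _.
rewrite (@sum_lower_widen B (C ^~ j) l i) -1?ltnS // mulr_sumr.
by apply: eq_bigr => k _; rewrite mulrA.
Qed.

Lemma imx_app_mul A B v : lower_tri B ->
  imx_app (imx_mul A B) v = imx_app A (imx_app B v).
Proof.
move=> lowB; have := imx_mulA A (fun k _ => v k) lowB.
by move=> /(congr1 (fun X i => X i 0%N)).
Qed.

Lemma imx_mul1l A : imx_mul imx_one A = A.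
Proof.
apply: functional_extensionality => i; apply: functional_extensionality => j.
rewrite /imx_mul /imx_one (eq_bigr (fun k : 'I_i.+1 => A k j * ((k : nat) == i)%:R)).
  by rewrite (sum_mul_delta (A ^~ j)) ltnSn.
by move=> k _; rewrite mulrC eq_sym.
Qed.

Lemma imx_mul1r A : lower_tri A -> imx_mul A imx_one = A.
Proof.
move=> lowA; apply: functional_extensionality => i; apply: functional_extensionality => j.
by rewrite /imx_mul (sum_mul_delta (A i)) ltnS; case: leqP => // /lowA ->.
Qed.

Lemma imx_app1 v : imx_app imx_one v = v.
Proof.
by have /(congr1 (fun X i => X i 0%N)) := imx_mul1l (fun k _ => v k).
Qed.

Lemma imx_app_Dmx v n : imx_app Dmx v n = (-1) ^+ n * v n.
Proof.
rewrite /imx_app (eq_bigr (fun k : 'I_n.+1 => (-1) ^+ k * v k * ((k : nat) == n)%:R)).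
  by rewrite (sum_mul_delta (fun k => (-1) ^+ k * v k)) ltnSn.
by move=> k _; rewrite Dmx_coef eq_sym; ring.
Qed.

Definition lower_unitri (A : imx) : Prop := lower_tri A /\ forall i, A i i = 1.

Fixpoint fwd_subst (A : imx) (j i : nat) : nat -> rat :=
  if i is i'.+1 then
    let x := fwd_subst A j i' in
    fun k => if (k <= i')%N then x k else (i == j)%:R - \sum_(l < i) A i l * x l
  else fun=> (0 == j)%:R.

Definition unitri_inv (A : imx) : imx := fun i j => fwd_subst A j i i.

Lemma fwd_subst_prefix A j i k : (k <= i)%N -> fwd_subst A j i k = unitri_inv A k j.
Proof.
elim: i => [|i IHi]; first by rewrite leqn0 => /eqP ->.
rewrite leq_eqVlt => /orP [/eqP -> // | lt_kSi] /=.
by rewrite -ltnS lt_kSi IHi // -ltnS.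
Qed.

Lemma unitri_invE A i j :
  unitri_inv A i j = (i == j)%:R - \sum_(k < i) A i k * unitri_inv A k j.
Proof.
case: i => [|i]; first by rewrite big_ord0 subr0.
rewrite {1}/unitri_inv /= ltnn; congr (_ - _).
by apply: eq_bigr => k _; rewrite fwd_subst_prefix // -ltnS.
Qed.

Lemma unitri_inv_lower A : lower_tri (unitri_inv A).
Proof.
move=> i; elim/ltn_ind: i => i IHi j lt_ij.
rewrite unitri_invE (ltn_eqF lt_ij) big1 ?subrr // => k _.
by rewrite IHi ?mulr0 // (ltn_trans (ltn_ord k)).
Qed.

Lemma unitri_inv_diag A i : unitri_inv A i i = 1.
Proof.
rewrite unitri_invE eqxx big1 ?subr0 // => k _.
by rewrite unitri_inv_lower ?mulr0.
Qed.

Lemma mul_unitri_inv A : (forall i, A i i = 1) -> imx_mul A (unitri_inv A) = imx_one.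
Proof.
move=> diagA; apply: functional_extensionality => i; apply: functional_extensionality => j.
by rewrite /imx_mul big_ord_recr /= diagA mul1r [unitri_inv A i j]unitri_invE addrC subrK.
Qed.

Lemma lower_unitri_inverse A : lower_unitri A -> is_inverse (unitri_inv A) A.
Proof.
move=> [lowA diagA].
have AX := mul_unitri_inv diagA.
have XY := mul_unitri_inv (@unitri_inv_diag A).
have invK : unitri_inv (unitri_inv A) = A.
  rewrite -[LHS]imx_mul1l -AX imx_mulA ?XY ?imx_mul1r //; exact: unitri_inv_lower.
split; [exact: unitri_inv_lower | split=> //].
by rewrite -{2}invK.
Qed.

Lemma Dmx_lower : lower_tri Dmx.
Proof. by move=> i j /ltn_eqF ij; rewrite Dmx_coef ij mul0r. Qed.

Lemma Dmx_conj_inverse_e A M w : lower_tri A -> is_inverse M A ->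
  (forall n, imx_app A w n = (-1) ^+ n) ->
  forall n, imx_app (imx_mul (imx_mul Dmx M) Dmx) e_vec n = (-1) ^+ n * w n.
Proof.
move=> lowA [lowM [MA _]] Aw n.
have De : imx_app Dmx e_vec = imx_app A w.
  by apply: functional_extensionality => k; rewrite imx_app_Dmx Aw mulr1.
rewrite !imx_app_mul //; last exact: Dmx_lower.
by rewrite De -(imx_app_mul M) // MA imx_app1 imx_app_Dmx.
Qed.

Lemma natr_mul_bin_left (R : pzRingType) k m :
  (m.+1)%:R * ('C(k, m.+1))%:R = (k%:R - m%:R) * ('C(k, m))%:R :> R.
Proof.
case: (leqP m k) => [le_mk|lt_km]; first by rewrite -natrB // -!natrM mul_bin_left.
by rewrite !bin_small ?mulr0 // ltnW.
Qed.

Lemma natr_mul_bin_down (R : pzRingType) k j :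
  k%:R * ('C(k.-1, j))%:R = (k%:R - j%:R) * ('C(k, j))%:R :> R.
Proof.
case: (leqP j k) => [le_jk|lt_kj]; first by rewrite -natrB // -!natrM mul_bin_down.
by rewrite !bin_small ?mulr0 // (leq_ltn_trans (leq_pred k)).
Qed.

Definition central_bin (k : nat) : rat := ('C(k.*2, k))%:R.

Lemma catalanE k : catalan k = central_bin k / (k.+1)%:R.
Proof. by []. Qed.

Lemma central_binS k : (k.+1)%:R * central_bin k.+1 = 2 * (2 * k%:R + 1) * central_bin k.
Proof.
have down : (k.*2.+1 * 'C(k.*2, k) = k.+1 * 'C(k.*2.+1, k))%N.
  by rewrite -[k.*2]/(k.*2.+1.-1) mul_bin_down -addnn -addSn addnK.
have : (k.+1 * 'C(k.+1.*2, k.+1) = 2 * (k.*2.+1 * 'C(k.*2, k)))%N.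
  by rewrite doubleS -mul_bin_diag down mulnA mul2n doubleS.
move/(congr1 (fun n => n%:R : rat)); rewrite !natrM => ->.
have -> : (k.*2.+1)%:R = 2 * k%:R + 1 :> rat by rewrite -[k.*2.+1]addn1 natrD -mul2n natrM.
by rewrite mulrA.
Qed.

Definition alt_term (a : nat -> rat) n k : rat := (-1) ^+ k * ('C(k, n - k))%:R * a k.

Definition bin_alt_sum (a : nat -> rat) n : rat := \sum_(k < n.+1) alt_term a n k.

Lemma creative_telescoping (R : idomainType) (t : nat -> nat -> R) (G : nat -> R)
    (c l : R) n :
  c != 0 -> G 0%N = 0 -> G n.+1 = c * t n.+1 n.+1 ->
  (forall k, (k <= n)%N -> c * (t n.+1 k + l * t n k) = G k - G k.+1) ->
  \sum_(k < n.+2) t n.+1 k = - l * \sum_(k < n.+1) t n k.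
Proof.
move=> c_neq0 G0 Gn step.
have telescope : c * (\sum_(k < n.+1) t n.+1 k + l * \sum_(k < n.+1) t n k) = - G n.+1.
  rewrite mulr_sumr -big_split mulr_sumr /=.
  rewrite (eq_bigr (fun k : 'I_n.+1 => - (G k.+1 - G k))); last first.
    by move=> k _; rewrite step ?opprB // -ltnS.
  by rewrite sumrN -(big_mkord xpredT (fun k => G k.+1 - G k)) telescope_sumr // G0 subr0.
apply: (mulfI c_neq0); rewrite big_ord_recr /=.
transitivity (c * (\sum_(k < n.+1) t n.+1 k + l * \sum_(k < n.+1) t n k)
              + c * t n.+1 n.+1 - c * l * \sum_(k < n.+1) t n k); first by ring.
by rewrite telescope Gn; ring.
Qed.

(* Found by Zeilberger's algorithm; it certifies both the central binomial and the
   Catalan sum. *)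
Definition zeil_cert n k : rat :=
  (-1) ^+ k * (k%:R * ('C(k.-1, n.+1 - k))%:R) * central_bin k.

Lemma zeil_cert0 n : zeil_cert n 0 = 0.
Proof. by rewrite /zeil_cert !(mul0r, mulr0). Qed.

Lemma zeil_cert_last n : zeil_cert n n.+1 = (n.+1)%:R * alt_term central_bin n.+1 n.+1.
Proof. by rewrite /zeil_cert /alt_term !subnn !bin0; ring. Qed.

Lemma zeil_cert_diff k m : zeil_cert (k + m) k - zeil_cert (k + m) k.+1 =
  (-1) ^+ k * central_bin k *
    ((k%:R - m%:R - 1) * ('C(k, m.+1))%:R + 2 * (2 * k%:R + 1) * ('C(k, m))%:R).
Proof.
have -> : zeil_cert (k + m) k.+1 =
    - ((-1) ^+ k * ('C(k, m))%:R * ((k.+1)%:R * central_bin k.+1)).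
  by rewrite /zeil_cert subSS addKn exprS /=; ring.
rewrite /zeil_cert -addnS addKn natr_mul_bin_down central_binS.
ring.
Qed.

Lemma zeil_step_central_bin k m :
  ((k + m).+1)%:R * (alt_term central_bin (k + m).+1 k + 2 * alt_term central_bin (k + m) k)
  = zeil_cert (k + m) k - zeil_cert (k + m) k.+1.
Proof.
have pascal : (m.+1)%:R * ('C(k, m.+1))%:R - (k%:R - m%:R) * ('C(k, m))%:R = 0 :> rat.
  by rewrite natr_mul_bin_left subrr.
rewrite zeil_cert_diff /alt_term -addnS !addKn.
(* LHS - RHS is a multiple of [pascal]; the multiplier is the argument of [mulr0]. *)
apply/eqP; rewrite -subr_eq0 -(mulr0 (2 * (-1) ^+ k * central_bin k)) -pascal.
by apply/eqP; ring.
Qed.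

Lemma zeil_step_catalan k m :
  ((k + m).+1)%:R * ((k + m).+2)%:R *
    (alt_term catalan (k + m).+1 k + alt_term catalan (k + m) k)
  = zeil_cert (k + m) k - zeil_cert (k + m) k.+1.
Proof.
have pascal : (m.+1)%:R * ('C(k, m.+1))%:R - (k%:R - m%:R) * ('C(k, m))%:R = 0 :> rat.
  by rewrite natr_mul_bin_left subrr.
rewrite zeil_cert_diff /alt_term !catalanE -addnS !addKn.
apply/eqP; rewrite -subr_eq0.
rewrite -(mulr0 ((-1) ^+ k * central_bin k / (k.+1)%:R * (3 * k%:R + m%:R + 3))) -pascal.
by apply/eqP; field; rewrite nat1r pnatr_eq0.
Qed.

Lemma bin_alt_sum_central_bin n : bin_alt_sum central_bin n = (-2) ^+ n.
Proof.
elim: n => [|n IHn]; first by rewrite /bin_alt_sum big_ord1 /alt_term !mul1r.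
rewrite /bin_alt_sum
  (@creative_telescoping _ (alt_term central_bin) (zeil_cert n) (n.+1)%:R 2).
- by rewrite -/(bin_alt_sum _ n) IHn exprS mulNr.
- by rewrite pnatr_eq0.
- exact: zeil_cert0.
- exact: zeil_cert_last.
by move=> k le_kn; rewrite -(subnKC le_kn) zeil_step_central_bin.
Qed.

Lemma bin_alt_sum_catalan n : bin_alt_sum catalan n = (-1) ^+ n.
Proof.
elim: n => [|n IHn]; first by rewrite /bin_alt_sum big_ord1 /alt_term !mul1r.
rewrite /bin_alt_sum
  (@creative_telescoping _ (alt_term catalan) (zeil_cert n) ((n.+1)%:R * (n.+2)%:R) 1).
- by rewrite -/(bin_alt_sum _ n) IHn exprS mulN1r.
- by rewrite mulf_neq0 ?pnatr_eq0.
- exact: zeil_cert0.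
- by rewrite zeil_cert_last /alt_term catalanE; field; rewrite -natrD pnatr_eq0.
by move=> k le_kn; rewrite mul1r -(subnKC le_kn) zeil_step_catalan.
Qed.

Lemma odd_mul_catalan k : (k.*2.+1)%:R * catalan k = 2 * central_bin k - catalan k.
Proof.
rewrite catalanE -[k.*2.+1]addn1 natrD -mul2n natrM.
by field; rewrite nat1r pnatr_eq0.
Qed.

Lemma bin_alt_sum_odd_catalan n :
  bin_alt_sum (fun k => (k.*2.+1)%:R * catalan k) n = 2 * (-2) ^+ n - (-1) ^+ n.
Proof.
rewrite -bin_alt_sum_central_bin -bin_alt_sum_catalan mulr_sumr -sumrB.
by apply: eq_bigr => k _; rewrite /alt_term odd_mul_catalan; ring.
Qed.

Lemma FS_lower_unitri : lower_unitri FS.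
Proof.
split=> [n k lt_nk | n]; first by rewrite FS_coef leqNgt lt_nk.
by rewrite FS_coef leqnn subnn bin0.
Qed.

Lemma LS_lower_unitri : lower_unitri LS.
Proof.
have [lowFS diagFS] := FS_lower_unitri.
split=> [n k lt_nk | n]; rewrite LS_coef.
  rewrite lowFS // add0r; case: n lt_nk => [|n] lt_nk /=; first by rewrite mulr0.
  by rewrite lowFS ?mulr0 // (ltn_trans _ lt_nk).
by rewrite diagFS; case: n => [|n] /=; rewrite ?lowFS ?mulr0 ?addr0.
Qed.

Lemma FS_app_alt a : imx_app FS (fun k => (-1) ^+ k * a k) = bin_alt_sum a.
Proof.
apply: functional_extensionality => n; apply: eq_bigr => k _.
by rewrite FS_coef -ltnS ltn_ord /alt_term mulrCA mulrA.
Qed.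

Lemma LS_app v n : imx_app LS v n = imx_app FS v n + 2 * ps_shift (imx_app FS v) n.
Proof.
rewrite /imx_app; under eq_bigr do rewrite LS_coef mulrDl -mulrA.
rewrite big_split -mulr_sumr /=; congr (_ + 2 * _).
case: n => [|n] /=; first by rewrite big1 // => k _; rewrite mul0r.
by rewrite big_ord_recr /= (proj1 FS_lower_unitri) // mul0r addr0.
Qed.

Lemma FS_alt_catalan n :
  imx_app FS (fun k => (-1) ^+ k * catalan k) n = (-1) ^+ n.
Proof. by rewrite FS_app_alt bin_alt_sum_catalan. Qed.

Lemma LS_alt_odd_catalan n :
  imx_app LS (fun k => (-1) ^+ k * ((k.*2.+1)%:R * catalan k)) n = (-1) ^+ n.
Proof.
rewrite LS_app FS_app_alt.
by case: n => [|n] /=; rewrite !bin_alt_sum_odd_catalan ?exprS; ring.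
Qed.

Theorem corollary3p4 :
  ((exists M, is_inverse M FS) /\
   forall M, is_inverse M FS ->
     forall n, imx_app (imx_mul (imx_mul Dmx M) Dmx) e_vec n = catalan n) /\
  ((exists M, is_inverse M LS) /\
   forall M, is_inverse M LS ->
     forall n, imx_app (imx_mul (imx_mul Dmx M) Dmx) e_vec n
               = (n.*2.+1)%:R * catalan n).
Proof.
have [lowFS _] := FS_lower_unitri; have [lowLS _] := LS_lower_unitri.
split; split.
- by eexists; apply: lower_unitri_inverse FS_lower_unitri.
- by move=> M invM n; rewrite (Dmx_conj_inverse_e lowFS invM FS_alt_catalan) signrMK.
- by eexists; apply: lower_unitri_inverse LS_lower_unitri.
- by move=> M invM n; rewrite (Dmx_conj_inverse_e lowLS invM LS_alt_odd_catalan) signrMK.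
Qed.
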